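(* Let $N_r,N_t$ be positive integers and let $\mathbf{H}$ be a random $N_r\times N_t$ complex matrix. For every $\mathrm{snr}>0$, $$I^{\rm mmse}(\mathrm{snr},N_r,N_t)=N_t\,E_{\mathbf H}\big[I^{\rm opt}(\mathrm{snr},N_r,N_t,\mathbf H)\big]-\sum_{i=1}^{N_t}E_{\mathbf H_i}\Big[I^{\rm opt}\Big(\tfrac{N_t-1}{N_t}\mathrm{snr},N_r,N_t-1,\mathbf H_i\Big)\Big],$$ where $\mathbf H_i$ is $\mathbf H$ with its $i$th column removed.
   Context: The channel $\mathbf H$ is normalized so that $E[\mathrm{tr}(\mathbf H\mathbf H^\dagger)]=N_rN_t$. For a deterministic complex matrix $\mathbf G$ with $N_r$ rows and $N$ columns and $\mathrm{snr}>0$, $I^{\rm opt}(\mathrm{snr},N_r,N,\mathbf G)=\log_2\det\big(\mathbf I_{N_r}+\frac{\mathrm{snr}}{N}\mathbf G\mathbf G^\dagger\big)$. The MMSE output SINR of stream $i$ is $\gamma_i=1/\big[(\mathbf I_{N_t}+\frac{\mathrm{snr}}{N_t}\mathbf H^\dagger\mathbf H)^{-1}\big]_{i,i}-1$, where $[\cdot]_{i,i}$ is the $i$th diagonal entry, and the MMSE achievable sum rate is $I^{\rm mmse}(\mathrm{snr},N_r,N_t)=\sum_{i=1}^{N_t}E[\log_2(1+\gamma_i)]$. *)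

From mathcomp Require Import all_boot all_algebra.
From mathcomp Require Import all_classical all_reals all_analysis.
From mathcomp.real_closed Require Import complex.
Set Implicit Arguments. Unset Strict Implicit. Unset Printing Implicit Defensive.
Import GRing.Theory Num.Theory.
Local Open Scope ring_scope.

Definition log2 {R : realType} (x : R) : R := ln x / ln 2.

Definition adjmx {R : realType} m n (G : 'M[R[i]]_(m, n)) : 'M[R[i]]_(n, m) :=
  (map_mx conjc G)^T.

(* I^opt(snr, Nr, N, G) = log2 det(I_Nr + snr/N G G^dagger).
   The determinant is real (and >= 1) since the matrix is Hermitian PSD + I;
   we take its real part to land in R. *)
Definition Iopt {R : realType} (snr : R) (Nr N : nat) (G : 'M[R[i]]_(Nr, N)) : R :=
  log2 (complex.Re (\det (1%:M + ((snr / N%:R)%:C)%C *: (G *m adjmx G)))).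

Definition mmse_sinr {R : realType} (snr : R) (Nr Nt : nat)
    (H : 'M[R[i]]_(Nr, Nt)) (i : 'I_Nt) : R :=
  complex.Re ((invmx (1%:M + ((snr / Nt%:R)%:C)%C *: (adjmx H *m H)) i i)^-1 - 1).

Definition random_cmatrix {d} {T : measurableType d} {R : realType}
    (Nr Nt : nat) (H : T -> 'M[R[i]]_(Nr, Nt)) : Prop :=
  forall (i : 'I_Nr) (j : 'I_Nt),
    measurable_fun setT (fun w => complex.Re (H w i j)) /\
    measurable_fun setT (fun w => complex.Im (H w i j)).

Definition Immse {d} {T : measurableType d} {R : realType} (P : probability T R)
    (snr : R) (Nr Nt : nat) (H : T -> 'M[R[i]]_(Nr, Nt)) : \bar R :=
  (\sum_(i < Nt) \int[P]_w (log2 (1 + mmse_sinr snr (H w) i))%:E)%E.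

(** Put [A := 1 + c H^† H] with [c := snr / Nt].  By Cramer's rule the [i]th
    diagonal entry of [A^-1] is [det A_i / det A], where the minor [A_i] is
    [1 + c H_i^† H_i]; hence [log2 (1 + gamma_i) = log2 det A - log2 det A_i].
    Sylvester's identity [det (1 + X Y) = det (1 + Y X)] turns [log2 det A] into
    [I^opt(snr, Nr, Nt, H)] and [log2 det A_i] into [I^opt] of [H_i] at
    [(Nt - 1) / Nt * snr], whose normalisation by [Nt - 1] gives back [c].  All expectations are
    finite: for [A >= 1] Hermitian, [1 <= det A <= exp (tr A - n)] (induction
    on Schur complements), so [0 <= log2 det A <= c tr (H H^†) / ln 2], and
    [E[tr (H H^†)] = Nr Nt]. *)

From mathcomp Require Import all_boot all_algebra.
From mathcomp Require Import all_classical all_reals all_analysis.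
From mathcomp.real_closed Require Import complex.
From mathcomp Require Import lra ring.
Import order.Order.TTheory GRing.Theory Num.Theory.
Local Open Scope ring_scope.

Lemma det_1DmulmxC (K : comPzRingType) m n (A : 'M[K]_(m, n)) (B : 'M[K]_(n, m)) :
  \det (1%:M + A *m B) = \det (1%:M + B *m A).
Proof.
set M := block_mx 1%:M A (- B) 1%:M.
have eliminate_left :
    block_mx 1%:M 0 B 1%:M *m M = block_mx 1%:M A 0 (1%:M + B *m A).
  by rewrite mulmx_block !mul1mx !mul0mx !mulmx1 ?add0r ?addr0 subrr addrC.
have eliminate_right :
    block_mx 1%:M (- A) 0 1%:M *m M = block_mx (1%:M + A *m B) 0 (- B) 1%:M.
  by rewrite mulmx_block !mul1mx !mul0mx !mulmx1 ?add0r ?addr0 mulNmx mulmxN opprK addrN.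
have := congr1 determinant eliminate_left; have := congr1 determinant eliminate_right.
rewrite !det_mulmx !det_ublock !det_lblock !det1 !mul1r !mulr1.
by move=> -> ->.
Qed.

Section SchurComplement.
Context {F : fieldType} {n : nat} {a : F} {u : 'rV[F]_n} {l : 'cV[F]_n} {D : 'M[F]_n}.

Definition schur1 : 'M[F]_n := D - l *m (a^-1 *: u).

Lemma det_block_schur1 : a != 0 -> \det (block_mx a%:M u l D) = a * \det schur1.
Proof.
move=> a0.
have -> : block_mx a%:M u l D =
          block_mx 1%:M 0 (a^-1 *: l) 1%:M *m block_mx a%:M u 0 schur1.
  rewrite mulmx_block !mul1mx !mul0mx ?addr0 ?add0r; congr block_mx.
    by rewrite -scalemxAl mul_mx_scalar scalerA mulVf // scale1r.
  by rewrite /schur1 -scalemxAl scalemxAr addrC subrK.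
by rewrite det_mulmx det_lblock det_ublock !det1 !mul1r det_scalar1.
Qed.

Lemma mxtrace_schur1 : \tr schur1 = \tr D - a^-1 * \tr (l *m u).
Proof. by rewrite /schur1 raddfB /= -scalemxAr mxtraceZ. Qed.

End SchurComplement.

Arguments schur1 {F n} a u l D.

Section ConjugateTranspose.
Context {R : realType}.
Local Notation C := R[i].

Lemma adjmxK m n (A : 'M[C]_(m, n)) : adjmx (adjmx A) = A.
Proof. by apply/matrixP => i j; rewrite !mxE conjcK. Qed.

Lemma adjmxM m n p (A : 'M[C]_(m, n)) (B : 'M[C]_(n, p)) :
  adjmx (A *m B) = adjmx B *m adjmx A.
Proof. by rewrite /adjmx map_mxM trmx_mul. Qed.

Lemma adjmxD m n (A B : 'M[C]_(m, n)) : adjmx (A + B) = adjmx A + adjmx B.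
Proof. by apply/matrixP => i j; rewrite !mxE rmorphD. Qed.

Lemma adjmxB m n (A B : 'M[C]_(m, n)) : adjmx (A - B) = adjmx A - adjmx B.
Proof. by apply/matrixP => i j; rewrite !mxE rmorphB. Qed.

Lemma adjmxZ m n (c : C) (A : 'M[C]_(m, n)) : adjmx (c *: A) = conjc c *: adjmx A.
Proof. by apply/matrixP => i j; rewrite !mxE rmorphM. Qed.

Lemma adjmx_scalar n (c : C) : adjmx (c%:M : 'M[C]_n) = (conjc c)%:M.
Proof. by apply/matrixP => i j; rewrite !mxE eq_sym rmorphMn. Qed.

Lemma adjmx0 m n : adjmx (0 : 'M[C]_(m, n)) = 0.
Proof. by apply/matrixP => i j; rewrite !mxE conjc0. Qed.

Lemma adjmx_block m1 m2 n1 n2 (Aul : 'M[C]_(m1, n1)) (Aur : 'M[C]_(m1, n2))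
    (Adl : 'M[C]_(m2, n1)) (Adr : 'M[C]_(m2, n2)) :
  adjmx (block_mx Aul Aur Adl Adr) =
  block_mx (adjmx Aul) (adjmx Adl) (adjmx Aur) (adjmx Adr).
Proof. by rewrite /adjmx map_block_mx tr_block_mx. Qed.

Lemma adjmx_col m1 m2 n (A1 : 'M[C]_(m1, n)) (A2 : 'M[C]_(m2, n)) :
  adjmx (col_mx A1 A2) = row_mx (adjmx A1) (adjmx A2).
Proof. by rewrite /adjmx map_col_mx tr_col_mx. Qed.

Lemma adjmx_mulmx_diag_ge0 m n (A : 'M[C]_(m, n)) (k : 'I_n) : 0 <= (adjmx A *m A) k k.
Proof. by rewrite mxE; apply: sumr_ge0 => i _; rewrite !mxE mulrC mulcJ_ge0. Qed.

Lemma mxtrace_mulmx_adjmx_ge0 {m n} (A : 'M[C]_(m, n)) : 0 <= \tr (A *m adjmx A).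
Proof. by rewrite mxtrace_mulC; apply: sumr_ge0 => i _; exact: adjmx_mulmx_diag_ge0. Qed.

Lemma ger0_complexE {z : C} : 0 <= z -> z = ((complex.Re z)%:C)%C.
Proof. by case: z => a b; rewrite lecE /= => /andP [/eqP -> _]. Qed.

Lemma ger0_Re {z : C} : 0 <= z -> 0 <= complex.Re z.
Proof. by case: z => a b; rewrite lecE /= => /andP []. Qed.

Lemma ger1_Re {z : C} : 1 <= z -> 1 <= complex.Re z.
Proof. by case: z => a b; rewrite lecE /= => /andP []. Qed.

Definition hermitian_ge1mx {n} (A : 'M[C]_n) : Prop :=
  adjmx A = A /\
  forall v : 'cV[C]_n, (adjmx v *m v) 0 0 <= (adjmx v *m A *m v) 0 0.

Section Block.
Context {n : nat} {a : C} {u : 'rV[C]_n} {l : 'cV[C]_n} {D : 'M[C]_n}.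
Hypothesis ge1A : hermitian_ge1mx (block_mx a%:M u l D).

Lemma hermitian_ge1mx_corner : 1 <= a.
Proof.
have := ge1A.2 (col_mx 1%:M 0).
rewrite adjmx_col adjmx_scalar conjc1 adjmx0 mul_row_col mul_row_block.
by rewrite !mul1mx !mul0mx ?mulmx0 ?addr0 mul_row_col mulmx1 mulmx0 addr0 !mxE /= !mulr1n.
Qed.

Lemma hermitian_ge1mx_block_adj : u = adjmx l /\ adjmx D = D.
Proof.
by have [/[swap]] := ge1A; rewrite adjmx_block => _ /eq_block_mx [_ -> _ ->].
Qed.

Lemma hermitian_ge1mx_schur1 : hermitian_ge1mx (schur1 a u l D).
Proof.
have a1 := hermitian_ge1mx_corner.
have ea := ger0_complexE (le_trans ler01 a1).
have a0 : a != 0 by rewrite gt_eqF // (lt_le_trans ltr01 a1).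
have [eu adjD] := hermitian_ge1mx_block_adj.
rewrite eu; split.
  rewrite /schur1 adjmxB adjD adjmxM adjmxZ adjmxK conjc_inv ea conjc_real -ea.
  by rewrite -scalemxAl scalemxAr.
(* Evaluate the form on [col_mx x w], where [x] minimises it for fixed [w]. *)
move=> w; set x := - (a^-1 *: (adjmx l *m w)).
have ax : a%:M *m x = - (adjmx l *m w).
  by rewrite /x mul_scalar_mx scalerN scalerA mulfV // scale1r.
have schurE : adjmx x *m - (adjmx l *m w) + adjmx w *m (l *m x) +
    (adjmx x *m (adjmx l *m w) + adjmx w *m (D *m w)) =
    adjmx w *m schur1 a (adjmx l) l D *m w.
  rewrite mulmxN addrACA addNr add0r /schur1 mulmxBr mulmxBl /x.
  by rewrite !mulmxN !mulmxA -!scalemxAr -!scalemxAl !mulmxA addrC.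
have := ge1A.2 (col_mx x w).
rewrite eu adjmx_col mul_row_col mul_row_block mul_row_col !mulmxDl -!mulmxA ax schurE.
rewrite -mulmxA => h; apply: le_trans h; rewrite [X in _ <= X]mxE lerDr.
exact: adjmx_mulmx_diag_ge0.
Qed.

End Block.

Lemma hermitian_ge1mx_det {n} {A : 'M[C]_n} : hermitian_ge1mx A ->
  1 <= \det A /\ complex.Re (\det A) <= expR (complex.Re (\tr A) - n%:R).
Proof.
elim: n A => [|n IH] A.
  by rewrite det_mx00 /mxtrace big_ord0 subrr expR0.
move: A; rewrite -[n.+1]/(1 + n)%N => A.
rewrite -(submxK A) (mx11_scalar (ulsubmx A)).
move: (ulsubmx A 0 0) (ursubmx A) (dlsubmx A) (drsubmx A) => a u l D ge1A.
have a1 := hermitian_ge1mx_corner ge1A.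
have [eu _] := hermitian_ge1mx_block_adj ge1A; subst u.
have [detS1 detS] := IH _ (hermitian_ge1mx_schur1 ge1A).
have a0 : a != 0 by rewrite gt_eqF // (lt_le_trans ltr01 a1).
rewrite (det_block_schur1 a0); split; first exact: mulr_ege1.
move: detS; rewrite mxtrace_block mxtrace_scalar mxtrace_schur1 mulr1n.
move: detS1 (mxtrace_mulmx_adjmx_ge0 l) a1; clear ge1A a0.
move: (\det (schur1 a (adjmx l) l D)) (\tr (l *m adjmx l)) => S t S1 t0 a1.
rewrite (ger0_complexE (le_trans ler01 S1)) (ger0_complexE t0).
rewrite (ger0_complexE (le_trans ler01 a1)).
move: (ger1_Re S1) (ger0_Re t0) (ger1_Re a1).
move: (complex.Re S) (complex.Re t) (complex.Re a) => {S1 t0 a1} s tau al s1 tau0 al1.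
rewrite -fmorphV -!rmorphM raddfB raddfD /= => s_le.
have al_le : al <= expR (al - 1) by have := expR_ge1Dx (al - 1); rewrite addrC subrK.
have {}s_le : s <= expR (complex.Re (\tr D) - n%:R).
  apply: le_trans s_le _; rewrite ler_expR.
  have : 0 <= al^-1 * tau by rewrite mulr_ge0 // invr_ge0 (le_trans ler01).
  lra.
apply: le_trans (ler_pM _ _ al_le s_le) _; try lra.
by rewrite -expRD ler_expR natrD; lra.
Qed.

End ConjugateTranspose.

Section ShiftedGram.
Context {R : realType}.
Local Notation C := R[i].

Definition shifted_gram {m n} (c : R) (G : 'M[C]_(m, n)) : 'M[C]_n :=
  1%:M + (c%:C)%C *: (adjmx G *m G).

Lemma hermitian_ge1mx_shifted_gram {m n} {c : R} (G : 'M[C]_(m, n)) :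
  0 <= c -> hermitian_ge1mx (shifted_gram c G).
Proof.
move=> c0; split.
  by rewrite adjmxD adjmx_scalar conjc1 adjmxZ conjc_real adjmxM adjmxK.
move=> v; rewrite mulmxDr mulmx1 mulmxDl [X in _ <= X]mxE lerDl.
rewrite -scalemxAr -scalemxAl mxE mulmxA -adjmxM -mulmxA.
by rewrite mulr_ge0 ?ler0c ?adjmx_mulmx_diag_ge0.
Qed.

Lemma shifted_gram_minor m n (c : R) (G : 'M[C]_(m, n.+1)) (i : 'I_n.+1) :
  row' i (col' i (shifted_gram c G)) = shifted_gram c (col' i G).
Proof.
apply/matrixP => j k; rewrite !mxE (inj_eq (@lift_inj _ i)); congr (_ + _ * _).
by apply: eq_bigr => r _; rewrite !mxE.
Qed.

Lemma det_shifted_gram_ge1 {m n} {c : R} (G : 'M[C]_(m, n)) :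
  0 <= c -> 1 <= \det (shifted_gram c G).
Proof. by move=> c0; case: (hermitian_ge1mx_det (hermitian_ge1mx_shifted_gram G c0)). Qed.

Lemma Iopt_shifted_gram m n (snr : R) (G : 'M[C]_(m, n)) :
  Iopt snr G = log2 (complex.Re (\det (shifted_gram (snr / n%:R) G))).
Proof. by rewrite /Iopt scalemxAl det_1DmulmxC -scalemxAr. Qed.

(* For [n = 0], [Iopt] divides by [0%:R]; both sides are then [log2 1], the
   matrices being empty. *)
Lemma Iopt_col' m n (snr : R) (G : 'M[C]_(m, n.+1)) (i : 'I_n.+1) :
  Iopt ((n.+1%:R - 1) / n.+1%:R * snr) (col' i G) =
  log2 (complex.Re (\det (shifted_gram (snr / n.+1%:R) (col' i G)))).
Proof.
rewrite Iopt_shifted_gram; case: n G i => [|n] G i.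
  by rewrite !det_mx00.
have -> : (n.+2%:R - 1) / n.+2%:R * snr / n.+1%:R = snr / n.+2%:R :> R.
  rewrite -[n.+2%:R]natr1 addrK; field.
  by have n0 := ler0n R n; apply/andP; split; apply/eqP; lra.
by [].
Qed.

Lemma mmse_sinr_shifted_gram m n (snr : R) (G : 'M[C]_(m, n.+1)) (i : 'I_n.+1) :
  0 <= snr ->
  1 + mmse_sinr snr G i =
  complex.Re (\det (shifted_gram (snr / n.+1%:R) G)) /
  complex.Re (\det (shifted_gram (snr / n.+1%:R) (col' i G))).
Proof.
move=> snr0; have c0 : 0 <= snr / n.+1%:R by rewrite divr_ge0.
rewrite /mmse_sinr -/(shifted_gram _ G).
have ge1A := det_shifted_gram_ge1 G c0.
have ge1M := det_shifted_gram_ge1 (col' i G) c0.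
have A0 : \det (shifted_gram (snr / n.+1%:R) G) != 0.
  by rewrite gt_eqF // (lt_le_trans ltr01).
rewrite /invmx unitmxE unitfE A0 !mxE /cofactor -signr_odd oddD addbb expr0 mul1r.
rewrite shifted_gram_minor (ger0_complexE (le_trans ler01 ge1A)).
rewrite (ger0_complexE (le_trans ler01 ge1M)) -fmorphV -rmorphM -fmorphV -rmorphB /=.
by rewrite invfM invrK mulrC addrC subrK.
Qed.

Lemma log2_1Dmmse_sinr m n (snr : R) (G : 'M[C]_(m, n.+1)) (i : 'I_n.+1) :
  0 <= snr ->
  log2 (1 + mmse_sinr snr G i) =
  Iopt snr G - Iopt ((n.+1%:R - 1) / n.+1%:R * snr) (col' i G).
Proof.
move=> snr0; have c0 : 0 <= snr / n.+1%:R by rewrite divr_ge0.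
have := ger1_Re (det_shifted_gram_ge1 G c0).
have := ger1_Re (det_shifted_gram_ge1 (col' i G) c0).
rewrite mmse_sinr_shifted_gram // Iopt_col' Iopt_shifted_gram /log2 -mulrBl => ge1M ge1A.
by rewrite ln_div // posrE (lt_le_trans ltr01).
Qed.

Lemma log2_det_shifted_gram_bounds {m n} {c : R} (G : 'M[C]_(m, n)) : 0 <= c ->
  0 <= log2 (complex.Re (\det (shifted_gram c G))) <=
  c / ln 2 * complex.Re (\tr (G *m adjmx G)).
Proof.
move=> c0; have [ge1 le_exp] := hermitian_ge1mx_det (hermitian_ge1mx_shifted_gram G c0).
have ln2_gt0 : 0 < ln (2 : R) by rewrite ln_gt0 // ltr1n.
have det_gt0 := lt_le_trans ltr01 (ger1_Re ge1).
rewrite /log2 divr_ge0 ?ln_ge0 ?ger1_Re ?ler1n //= mulrAC ler_pM2r ?invr_gt0 //.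
rewrite -(ler_ln det_gt0) ?posrE ?expR_gt0 // in le_exp.
apply: le_trans le_exp _; rewrite expRK /shifted_gram mxtraceD mxtrace1 mxtraceZ mxtrace_mulC.
rewrite (ger0_complexE (mxtrace_mulmx_adjmx_ge0 G)) -rmorphM raddfD /= raddfMn /=.
by rewrite addrC addKr.
Qed.

Lemma mxtrace_col'_le {m n} (G : 'M[C]_(m, n.+1)) (i : 'I_n.+1) :
  complex.Re (\tr (col' i G *m adjmx (col' i G))) <= complex.Re (\tr (G *m adjmx G)).
Proof.
rewrite mxtrace_mulC [X in _ <= complex.Re X]mxtrace_mulC /mxtrace (bigD1_ord i) //=.
have -> : \sum_(j < n) (adjmx (col' i G) *m col' i G) j j =
          \sum_(j < n) (adjmx G *m G) (lift i j) (lift i j).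
  by apply: eq_bigr => j _; rewrite !mxE; apply: eq_bigr => r _; rewrite !mxE.
by rewrite raddfD /= lerDr ger0_Re ?adjmx_mulmx_diag_ge0.
Qed.

End ShiftedGram.

Section ComplexMeasurability.
Context {d : measure_display} {T : measurableType d} {R : realType}.
Local Notation C := R[i].

Definition cmeasurable (f : T -> C) : Prop :=
  measurable_fun setT (fun w => complex.Re (f w)) /\
  measurable_fun setT (fun w => complex.Im (f w)).

Lemma cmeasurable_cst (c : C) : cmeasurable (fun=> c).
Proof. by split; exact: measurable_cst. Qed.

Lemma cmeasurableD (f g : T -> C) :
  cmeasurable f -> cmeasurable g -> cmeasurable (fun w => f w + g w).
Proof.
move=> [mf1 mf2] [mg1 mg2]; split.
  rewrite (_ : (fun w => _) = (fun w => complex.Re (f w)) \+ (fun w => complex.Re (g w))).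
    exact: measurable_realfun.measurable_funD.
  by apply/funext => w /=; rewrite raddfD.
rewrite (_ : (fun w => _) = (fun w => complex.Im (f w)) \+ (fun w => complex.Im (g w))).
  exact: measurable_realfun.measurable_funD.
by apply/funext => w /=; rewrite raddfD.
Qed.

Lemma cmeasurableM (f g : T -> C) :
  cmeasurable f -> cmeasurable g -> cmeasurable (fun w => f w * g w).
Proof.
move=> [mf1 mf2] [mg1 mg2]; split.
  rewrite (_ : (fun w => _) = (fun w => complex.Re (f w)) \* (fun w => complex.Re (g w))
                             \- (fun w => complex.Im (f w)) \* (fun w => complex.Im (g w))).
    by apply: measurable_realfun.measurable_funB; exact: measurable_realfun.measurable_funM.
  by apply/funext => w /=; case: (f w) => ? ?; case: (g w).
rewrite (_ : (fun w => _) = (fun w => complex.Re (f w)) \* (fun w => complex.Im (g w))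
                           \+ (fun w => complex.Im (f w)) \* (fun w => complex.Re (g w))).
  by apply: measurable_realfun.measurable_funD; exact: measurable_realfun.measurable_funM.
by apply/funext => w /=; case: (f w) => ? ?; case: (g w).
Qed.

Lemma cmeasurable_conj (f : T -> C) : cmeasurable f -> cmeasurable (fun w => conjc (f w)).
Proof.
move=> [mf1 mf2]; split.
  by rewrite (_ : (fun w => _) = (fun w => complex.Re (f w))) //; apply/funext => w; case: (f w).
rewrite (_ : (fun w => _) = \- (fun w => complex.Im (f w))).
  exact: measurable_realfun.measurable_funN.
by apply/funext => w /=; case: (f w).
Qed.

Lemma cmeasurable_sum (I : Type) (r : seq I) (P : pred I) (F : I -> T -> C) :
  (forall i, P i -> cmeasurable (F i)) -> cmeasurable (fun w => \sum_(i <- r | P i) F i w).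
Proof.
by move=> mF; rewrite -fct_sumE; elim/big_ind: _ => //; exact: cmeasurableD.
Qed.

Lemma cmeasurable_prod (I : Type) (r : seq I) (P : pred I) (F : I -> T -> C) :
  (forall i, P i -> cmeasurable (F i)) -> cmeasurable (fun w => \prod_(i <- r | P i) F i w).
Proof.
by move=> mF; rewrite -fct_prodE; elim/big_ind: _ => //; exact: cmeasurableM.
Qed.

End ComplexMeasurability.

Section MatrixMeasurability.
Context {d : measure_display} {T : measurableType d} {R : realType}.
Local Notation C := R[i].

Definition mxmeasurable {m n} (F : T -> 'M[C]_(m, n)) : Prop :=
  forall i j, cmeasurable (fun w => F w i j).

Lemma mxmeasurable_cst m n (A : 'M[C]_(m, n)) : mxmeasurable (fun=> A).
Proof. by move=> i j; exact: cmeasurable_cst. Qed.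

Lemma mxmeasurableD m n (F G : T -> 'M[C]_(m, n)) :
  mxmeasurable F -> mxmeasurable G -> mxmeasurable (fun w => F w + G w).
Proof.
move=> mF mG i j; rewrite (_ : (fun w => _) = fun w => F w i j + G w i j).
  exact: cmeasurableD.
by apply/funext => w; rewrite mxE.
Qed.

Lemma mxmeasurableZ m n (c : C) (F : T -> 'M[C]_(m, n)) :
  mxmeasurable F -> mxmeasurable (fun w => c *: F w).
Proof.
move=> mF i j; rewrite (_ : (fun w => _) = fun w => c * F w i j).
  exact/cmeasurableM/mF/cmeasurable_cst.
by apply/funext => w; rewrite mxE.
Qed.

Lemma mxmeasurableM {m n p} {F : T -> 'M[C]_(m, n)} {G : T -> 'M[C]_(n, p)} :
  mxmeasurable F -> mxmeasurable G -> mxmeasurable (fun w => F w *m G w).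
Proof.
move=> mF mG i j; rewrite (_ : (fun w => _) = fun w => \sum_k F w i k * G w k j).
  by apply: cmeasurable_sum => k _; exact: cmeasurableM.
by apply/funext => w; rewrite mxE.
Qed.

Lemma mxmeasurable_adj {m n} {F : T -> 'M[C]_(m, n)} :
  mxmeasurable F -> mxmeasurable (fun w => adjmx (F w)).
Proof.
move=> mF i j; rewrite (_ : (fun w => _) = fun w => conjc (F w j i)).
  exact: cmeasurable_conj.
by apply/funext => w; rewrite !mxE.
Qed.

Lemma mxmeasurable_col' {m n} {F : T -> 'M[C]_(m, n)} (k : 'I_n) :
  mxmeasurable F -> mxmeasurable (fun w => col' k (F w)).
Proof.
move=> mF i j; rewrite (_ : (fun w => _) = fun w => F w i (lift k j)) //.
by apply/funext => w; rewrite mxE.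
Qed.

Lemma cmeasurable_det n (F : T -> 'M[C]_n) :
  mxmeasurable F -> cmeasurable (fun w => \det (F w)).
Proof.
move=> mF; apply: cmeasurable_sum => s _.
by apply: cmeasurableM; [exact: cmeasurable_cst | apply: cmeasurable_prod].
Qed.

Lemma cmeasurable_tr {n} {F : T -> 'M[C]_n} :
  mxmeasurable F -> cmeasurable (fun w => \tr (F w)).
Proof. by move=> mF; apply: cmeasurable_sum. Qed.

Lemma measurable_log2_det_shifted_gram m n (c : R) (F : T -> 'M[C]_(m, n)) :
  mxmeasurable F ->
  measurable_fun setT (fun w => log2 (complex.Re (\det (shifted_gram c (F w))))).
Proof.
move=> mF.
have [mdet _] : cmeasurable (fun w => \det (shifted_gram c (F w))).
  apply/cmeasurable_det/mxmeasurableD; first exact: mxmeasurable_cst.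
  by apply/mxmeasurableZ/mxmeasurableM => //; exact: mxmeasurable_adj.
rewrite (_ : (fun w => _) = (@ln R \o (fun w => complex.Re (\det (shifted_gram c (F w)))))
                           \* cst (ln 2)^-1) //.
apply: measurable_realfun.measurable_funM; last exact: measurable_cst.
by apply: measurableT_comp mdet; exact: measurable_realfun.measurable_ln.
Qed.

End MatrixMeasurability.

Lemma sum_integralB d (T : measurableType d) (R : realType)
    (mu : {measure set T -> \bar R}) n (f : T -> R) (g : 'I_n -> T -> R) :
  mu.-integrable setT (EFin \o f) -> (forall i, mu.-integrable setT (EFin \o g i)) ->
  (\sum_(i < n) \int[mu]_w (f w - g i w)%:E =
   n%:R%:E * \int[mu]_w (f w)%:E - \sum_(i < n) \int[mu]_w (g i w)%:E)%E.
Proof.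
move=> intf intg.
under eq_bigr do rewrite integralB_EFin //.
have [a ->] : exists a, (\int[mu]_w (f w)%:E = a%:E)%E.
  by exists (fine (\int[mu]_w (f w)%:E)); rewrite fineK // integrable_fin_num.
have eb i : (\int[mu]_w (g i w)%:E = (fine (\int[mu]_w (g i w)%:E))%:E)%E.
  by rewrite fineK // integrable_fin_num // intg.
under eq_bigr do rewrite eb.
under [X in (_ - X)%E]eq_bigr do rewrite eb.
by rewrite !sumEFin -EFinM -EFinB sumrB sumr_const card_ord mulr_natl.
Qed.

Lemma integrable_log2_det_shifted_gram {d} {T : measurableType d} {R : realType}
    {mu : {measure set T -> \bar R}} {m n} {c : R} {F : T -> 'M[R[i]]_(m, n)} {t : T -> R} :
  0 <= c -> mxmeasurable F -> mu.-integrable setT (EFin \o t) ->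
  (forall w, complex.Re (\tr (F w *m adjmx (F w))) <= t w) ->
  mu.-integrable setT (fun w => (log2 (complex.Re (\det (shifted_gram c (F w)))))%:E).
Proof.
move=> c0 mF intt le_t.
have K0 : 0 <= c / ln 2 by rewrite divr_ge0 // ln_ge0 // ler1n.
apply: le_integrable (integrableZl measurableT (c / ln 2) intt) => //.
  exact/measurable_realfun.measurable_EFinP/measurable_log2_det_shifted_gram.
move=> w _; have /andP [ge0 le] := log2_det_shifted_gram_bounds (F w) c0.
have le_Kt := le_trans le (ler_wpM2l K0 (le_t w)).
by rewrite /= lee_fin !ger0_norm // (le_trans ge0).
Qed.

Theorem theorem1 (d : measure_display) (T : measurableType d) (R : realType)
    (P : probability T R) (Nr Nt : nat) (H : T -> 'M[R[i]]_(Nr, Nt))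
    (snr : R) :
  (0 < Nr)%N -> (0 < Nt)%N ->
  random_cmatrix H ->
  (\int[P]_w (complex.Re (\tr (H w *m adjmx (H w))))%:E = (Nr * Nt)%:R%:E)%E ->
  0 < snr ->
  Immse P snr H =
  (Nt%:R%:E * \int[P]_w (Iopt snr (H w))%:E
   - \sum_(i < Nt)
       \int[P]_w (Iopt ((Nt%:R - 1) / Nt%:R * snr) (col' i (H w)))%:E)%E.
Proof.
case: Nt H => [//|n] H _ _ mH trace_int snr_gt0.
have snr0 := ltW snr_gt0; have c0 : 0 <= snr / n.+1%:R by rewrite divr_ge0.
pose t w := complex.Re (\tr (H w *m adjmx (H w))).
have int_t : P.-integrable setT (EFin \o t).
  apply/integrableP; split.
    apply/measurable_realfun.measurable_EFinP.
    by have [] := cmeasurable_tr (mxmeasurableM mH (mxmeasurable_adj mH)).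
  rewrite (eq_integral (EFin \o t)) ?trace_int ?ltry // => w _.
  by rewrite gee0_abs // lee_fin ger0_Re ?mxtrace_mulmx_adjmx_ge0.
rewrite /Immse -sum_integralB.
- apply: eq_bigr => i _; apply: eq_integral => w _.
  by rewrite log2_1Dmmse_sinr.
- apply: eq_integrable measurableT _ _ _
    (integrable_log2_det_shifted_gram c0 mH int_t (fun w => lexx (t w))) => w _.
  by rewrite /= Iopt_shifted_gram.
- move=> i; apply: eq_integrable measurableT _ _ _
    (integrable_log2_det_shifted_gram c0 (mxmeasurable_col' i mH) int_t
      (fun w => mxtrace_col'_le (H w) i)) => w _.
  by rewrite /= Iopt_col'.
Qed.
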